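(* For all integers $n\geq0$, \[ \sum_{j=0}^n\binom{2(n-j)}{n-j}C_jO_{n-j}=\frac12\binom{2(n+1)}{n+1}O_{n+1}-\frac{4^n}{n+1}. \]
   Context: $O_n=\sum_{j=1}^n\frac1{2j-1}$ ($O_0=0$), and $C_n=\frac1{n+1}\binom{2n}{n}$ is the $n$th Catalan number. *)

From mathcomp Require Import all_boot all_order all_algebra.
Set Implicit Arguments. Unset Strict Implicit. Unset Printing Implicit Defensive.
Import Order.TTheory GRing.Theory Num.Theory.
Local Open Scope ring_scope.

Definition Oodd (n : nat) : rat := \sum_(1 <= j < n.+1) ((2 * j - 1)%N%:R)^-1.

Definition catalan (n : nat) : rat := ('C(2 * n, n))%:R / (n.+1)%:R.

(* With B(x) = (1 - 4x)^(-1/2) = \sum_k cbin k x^k, H(x) = -log(1 - 4x)/2 = \sum_i hlog i x^i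
   and C(x) the Catalan series, the coefficients of B H are cbin k * Oodd k, and
   C B = (B - 1)/(2x).  The left-hand side is the n-th coefficient of C (B H) = (C B) H, i.e.
   half the (n+1)-th coefficient of B H - H.  Everything is done coefficientwise, with [conv]
   the Cauchy product: B H and the sequence cbin k * Oodd k agree because both satisfy the recurrence induced by
   (1 - 4x) B' = 2 B and (1 - 4x) H' = 2, and the coefficients of C B telescope. *)

From mathcomp Require Import all_boot all_order all_algebra.
From mathcomp Require Import ring zify.
Set Implicit Arguments. Unset Strict Implicit. Unset Printing Implicit Defensive.
Import Order.TTheory GRing.Theory Num.Theory.
Local Open Scope ring_scope.

Section Convolution.

Variable R : comNzRingType.
Implicit Types (f g h : nat -> R) (n : nat).

Definition conv f g n : R := \sum_(i < n.+1) f i * g (n - i)%N.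

Lemma eq_conv f f' g g' n :
  (forall i, (i <= n)%N -> f i = f' i) -> (forall i, (i <= n)%N -> g i = g' i) ->
  conv f g n = conv f' g' n.
Proof.
move=> eq_f eq_g; apply: eq_bigr => -[i /= lt_in] _.
by rewrite eq_f // eq_g // leq_subr.
Qed.

Lemma coef_mul_poly f g N n : (n < N)%N ->
  (\poly_(i < N) f i * \poly_(i < N) g i)`_n = conv f g n.
Proof.
move=> lt_nN; rewrite coefM; apply: eq_bigr => -[i /= lt_in] _.
by rewrite !coef_poly (leq_ltn_trans (leq_subr i n) lt_nN) (leq_trans lt_in lt_nN).
Qed.

Lemma convC f g n : conv f g n = conv g f n.
Proof. by rewrite -!(@coef_mul_poly _ _ n.+1) // mulrC. Qed.

Lemma convA f g h n : conv f (conv g h) n = conv (conv f g) h n.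
Proof.
pose P (u : nat -> R) := \poly_(i < n.+1) u i.
have coefP (u : nat -> R) i : (i <= n)%N -> u i = (P u)`_i by rewrite coef_poly ltnS => ->.
have coefPP (u v : nat -> R) i : (i <= n)%N -> conv u v i = (P u * P v)`_i.
  by move=> le_in; rewrite coef_mul_poly.
rewrite (eq_conv (coefP f) (coefPP g h)) (eq_conv (coefPP f g) (coefP h)).
by rewrite /conv -!coefM mulrA.
Qed.

Lemma convSl f g n : conv f g n.+1 = f 0%N * g n.+1 + conv (fun i => f i.+1) g n.
Proof. by rewrite /conv big_ord_recl subn0. Qed.

Lemma convSr f g n : conv f g n.+1 = f n.+1 * g 0%N + conv f (fun i => g i.+1) n.
Proof. by rewrite convC convSl convC mulrC. Qed.

Lemma convZl c f g n : conv (fun i => c * f i) g n = c * conv f g n.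
Proof. by rewrite /conv mulr_sumr; apply: eq_bigr => i _; rewrite mulrA. Qed.

Lemma convZr c f g n : conv f (fun i => c * g i) n = c * conv f g n.
Proof. by rewrite convC convZl convC. Qed.

Lemma conv_delta0r f n : conv f (fun i => (i == 0%N)%:R) n = f n.
Proof.
rewrite /conv big_ord_recr /= subnn mulr1 big1 ?add0r // => -[i /= lt_in] _.
by rewrite subn_eq0 leqNgt lt_in mulr0.
Qed.

Lemma conv_Leibniz f g n :
  n%:R * conv f g n = conv (fun i => i%:R * f i) g n + conv f (fun i => i%:R * g i) n.
Proof.
rewrite /conv mulr_sumr -big_split; apply: eq_bigr => -[i /= lt_in] _.
by rewrite -{1}(subnKC (ltnSE lt_in)) natrD; ring.
Qed.

(* Coefficientwise form of (1 - c x) (f g)' = ((1 - c x) f') g + f ((1 - c x) g'). *)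
Lemma deriv_conv_rec c f g p q :
  (forall i, i.+1%:R * f i.+1 = c * (i%:R * f i) + p i) ->
  (forall i, i.+1%:R * g i.+1 = c * (i%:R * g i) + q i) ->
  forall n, n.+1%:R * conv f g n.+1 = c * (n%:R * conv f g n) + conv p g n + conv f q n.
Proof.
move=> rec_f rec_g n.
rewrite conv_Leibniz convSl convSr !mul0r mulr0 !add0r.
rewrite (eq_conv (fun i _ => rec_f i) (fun i _ => erefl)).
rewrite (eq_conv (fun i _ => erefl) (fun i _ => rec_g i)).
rewrite conv_Leibniz /conv mulrDr !mulr_sumr -!big_split /=.
by apply: eq_bigr => i _; ring.
Qed.

End Convolution.

Lemma paddr_neq0 (R : numDomainType) (c x : R) : 0 < c -> 0 <= x -> c + x != 0.
Proof. by move=> c_gt0 x_ge0; rewrite lt0r_neq0 // ltr_pwDl. Qed.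

Definition cbin (k : nat) : rat := 'C(2 * k, k)%:R.

(* [hlog 0 = 0] because [0^-1 = 0]. *)
Definition hlog (i : nat) : rat := 4 ^+ i / (2 * i)%N%:R.

Lemma mul_central_binS k :
  (k.+1 * 'C(2 * k.+1, k.+1) = 2 * (2 * k).+1 * 'C(2 * k, k))%N.
Proof.
have binS_sym : 'C((2 * k).+1, k) = 'C((2 * k).+1, k.+1).
  by rewrite -bin_sub; [congr 'C(_, _); lia | lia].
rewrite mulnS -(mul_bin_diag (2 * k).+2) /= binS_sym.
have -> : ((2 * k).+2 = 2 * k.+1)%N by rewrite mulnS.
by rewrite -mulnA -mul_bin_diag mulnA.
Qed.

Lemma cbinS k : cbin k.+1 = (4 * k + 2)%:R / k.+1%:R * cbin k.
Proof.
have nz_k1 : k.+1%:R != 0 :> rat by rewrite pnatr_eq0.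
apply: (mulfI nz_k1); rewrite mulrA mulrCA mulfV // mulr1 /cbin -!natrM.
by rewrite mul_central_binS mulnSr mulnA.
Qed.

Lemma cbin_rec i : i.+1%:R * cbin i.+1 = 4 * (i%:R * cbin i) + 2 * cbin i.
Proof. by rewrite cbinS; field; rewrite paddr_neq0. Qed.

Lemma hlog_rec i : i.+1%:R * hlog i.+1 = 4 * (i%:R * hlog i) + 2 * (i == 0%N)%:R.
Proof.
case: i => [|i] /=; rewrite /hlog.
  by rewrite mul0r mulr0 add0r; field.
by rewrite mulr0 addr0 exprS; field; rewrite !paddr_neq0.
Qed.

Lemma OoddS k : Oodd k.+1 = Oodd k + (2 * k).+1%:R^-1.
Proof. by rewrite /Oodd big_nat_recr //= mulnSr addn2. Qed.

Lemma cbin_Oodd k : cbin k * Oodd k = conv cbin hlog k.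
Proof.
elim: k => [|k IHk].
  by rewrite /Oodd big_geq // mulr0 /conv big_ord1 /hlog muln0 invr0 !mulr0.
have nz_k1 : k.+1%:R != 0 :> rat by rewrite pnatr_eq0.
apply: (mulfI nz_k1).
rewrite (deriv_conv_rec cbin_rec hlog_rec) convZl convZr conv_delta0r -IHk OoddS cbinS.
by field; rewrite !paddr_neq0 ?mulr_ge0.
Qed.

Lemma catalan_cbin_telescope j k :
  2 * (j + k).+1%:R * (catalan j * cbin k)
  = k.+1%:R * cbin j * cbin k.+1 - k%:R * cbin j.+1 * cbin k.
Proof. by rewrite /catalan -/(cbin j) !cbinS; field; rewrite !paddr_neq0 ?mulr_ge0. Qed.

Lemma conv_catalan_cbin m : conv catalan cbin m = 2^-1 * cbin m.+1.
Proof.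
pose Q j := - ((m.+1 - j)%:R * cbin j * cbin (m.+1 - j)).
have nz_2m1 : 2 * m.+1%:R != 0 :> rat by rewrite mulf_neq0 ?pnatr_eq0.
apply: (mulfI nz_2m1); rewrite /conv mulr_sumr.
rewrite -(big_mkord xpredT (fun j => 2 * m.+1%:R * (catalan j * cbin (m - j)))).
rewrite (@telescope_sumr_eq _ _ _ Q) // => [|j /= lt_jm].
  by rewrite /Q subnn subn0 mul0r oppr0 sub0r opprK mulr1; field.
by rewrite /Q opprK addrC subSS subSn // -catalan_cbin_telescope subnKC.
Qed.

Theorem corollary3 (n : nat) :
  \sum_(0 <= j < n.+1)
      ('C(2 * (n - j), n - j))%:R * catalan j * Oodd (n - j)
  = 2^-1 * ('C(2 * n.+1, n.+1))%:R * Oodd n.+1 - (4 ^ n)%N%:R / (n.+1)%:R :> rat.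
Proof.
have -> : \sum_(0 <= j < n.+1) cbin (n - j) * catalan j * Oodd (n - j)
          = conv catalan (conv cbin hlog) n.
  by rewrite big_mkord; apply: eq_bigr => j _; rewrite -cbin_Oodd [cbin _ * _]mulrC -mulrA.
rewrite convA (eq_conv (fun m _ => conv_catalan_cbin m) (fun _ _ => erefl)) convZl.
rewrite -[conv _ hlog n](addKr (cbin 0 * hlog n.+1)) -convSl -cbin_Oodd.
by rewrite /cbin /= mul1r /hlog natrX exprS; field; rewrite paddr_neq0.
Qed.
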